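(* Let $K\ge 1$ be an integer, $\mathcal{I}=\{1,\dots,K\}$, and let $\lambda_i>0$, $\gamma_{ui}>0$, $\gamma_{di}>0$ ($i\in\mathcal{I}$), $\gamma_u>0$, $\gamma_d>0$ be given, together with asset proportions $m_i>0$ ($i\in\mathcal{I}$) satisfying $\sum_{i\in\mathcal{I}} m_i<1$. Let $E=\{(h,n),(l,n)\}\cup\{(hi,o),(li,o): i\in\mathcal{I}\}$. Then there exists a unique function $\mu:E\to[0,\infty)$ (a steady state of the non-segmented market) satisfying \[0=-\mu(h,n)\sum_{i\in\mathcal{I}}\lambda_i\mu(li,o)+\gamma_u\mu(l,n)-\gamma_d\mu(h,n),\] \[0=-\lambda_i\mu(h,n)\mu(li,o)-\gamma_{ui}\mu(li,o)+\gamma_{di}\mu(hi,o)\quad\text{for all } i\in\mathcal{I},\] together with the constraints \[\mu(hi,o)+\mu(li,o)=m_i\ \ (i\in\mathcal{I}),\qquad \sum_{i\in\mathcal{I}}m_i+\mu(h,n)+\mu(l,n)=1.\]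
   Context: This is the stationary version of the non-segmented over-the-counter market model: $\mu(z)$ is the proportion of investors in state $z\in E$, where $(h,n)$/$(l,n)$ denote high/low liquidity-type investors owning no asset and $(hi,o)$/$(li,o)$ denote high/low-type investors owning asset $i$. The time-dependent dynamics are $\dot\mu_t(h,n)=-\mu_t(h,n)\sum_i\lambda_i\mu_t(li,o)+\gamma_u\mu_t(l,n)-\gamma_d\mu_t(h,n)$ and $\dot\mu_t(li,o)=-\lambda_i\mu_t(h,n)\mu_t(li,o)-\gamma_{ui}\mu_t(li,o)+\gamma_{di}\mu_t(hi,o)$ under the stated constraints; a steady state is a solution with zero time derivative. *)

From mathcomp Require Import all_boot all_order all_algebra.
From mathcomp Require Import all_classical all_reals.
Set Implicit Arguments. Unset Strict Implicit. Unset Printing Implicit Defensive.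
Import Order.TTheory GRing.Theory Num.Theory.
Local Open Scope ring_scope.

(* State space E = {(h,n),(l,n)} ∪ {(hi,o),(li,o) : i ∈ I}, I = 'I_K (indices 0..K-1). *)
Inductive state (K : nat) : Type :=
  | HN : state K
  | LN : state K
  | HO : 'I_K -> state K
  | LO : 'I_K -> state K.

Definition is_steady_state (R : realType) (K : nat)
  (lambda gui gdi : 'I_K -> R) (gu gd : R) (m : 'I_K -> R)
  (mu : state K -> R) : Prop :=
  (forall x, 0 <= mu x) /\
  0 = - mu (HN K) * (\sum_(i < K) lambda i * mu (LO i)) + gu * mu (LN K)
        - gd * mu (HN K) /\
  (forall i : 'I_K,
     0 = - lambda i * mu (HN K) * mu (LO i) - gui i * mu (LO i)
         + gdi i * mu (HO i)) /\
  (forall i : 'I_K, mu (HO i) + mu (LO i) = m i) /\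
  (\sum_(i < K) m i) + mu (HN K) + mu (LN K) = 1.

From mathcomp Require Import all_boot all_order all_algebra.
From mathcomp Require Import all_classical all_reals all_analysis.
From mathcomp Require Import ring lra.
Set Implicit Arguments. Unset Strict Implicit. Unset Printing Implicit Defensive.
Import Order.TTheory GRing.Theory Num.Theory.
Import numFieldNormedType.Exports.
Local Open Scope ring_scope.

(** Once the mass [x] of high-type non-owners is fixed, the equation for
    [(li,o)] is linear in [mu (li,o)], so the whole profile is determined by
    [x]; the remaining balance equation for [(h,n)] reads [balance x = gu (1 - S)]
    with [S] the total asset supply.  The map [balance] is continuous and
    strictly increasing on [[0, +oo)], vanishes at [0] and exceeds [gu (1 - S)]
    at [1 - S], so that equation has exactly one nonnegative root. *)

Lemma ler_affine_ratio (R : realFieldType) (a l c x y : R) :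
  0 <= a -> 0 <= l -> 0 < c -> 0 <= x -> x <= y ->
  a * x / (l * x + c) <= a * y / (l * y + c).
Proof.
move=> a_ge0 l_ge0 c_gt0 x_ge0 le_xy.
have dx_gt0 : 0 < l * x + c by rewrite ltr_wpDl ?mulr_ge0.
have dy_gt0 : 0 < l * y + c by rewrite ltr_wpDl ?mulr_ge0 //; exact: le_trans le_xy.
rewrite -subr_ge0.
have -> : a * y / (l * y + c) - a * x / (l * x + c)
    = a * c * (y - x) / ((l * x + c) * (l * y + c)).
  by field; rewrite !lt0r_neq0.
by rewrite divr_ge0 ?mulr_ge0 ?subr_ge0 ?(ltW c_gt0) ?(ltW dx_gt0) ?(ltW dy_gt0).
Qed.

Section SteadyState.
Variables (R : realType) (K : nat).
Variables (lambda gui gdi : 'I_K -> R) (gu gd : R) (m : 'I_K -> R).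
Hypotheses (lambda_gt0 : forall i, 0 < lambda i).
Hypotheses (gui_gt0 : forall i, 0 < gui i) (gdi_gt0 : forall i, 0 < gdi i).
Hypotheses (gu_gt0 : 0 < gu) (gd_gt0 : 0 < gd).
Hypotheses (m_gt0 : forall i, 0 < m i) (supply_lt1 : \sum_(i < K) m i < 1).

Let supply := \sum_(i < K) m i.

Definition lo_mass (x : R) (i : 'I_K) : R :=
  gdi i * m i / (lambda i * x + (gui i + gdi i)).

Definition profile (x : R) (s : state K) : R :=
  match s with
  | HN => x
  | LN => 1 - supply - x
  | HO i => m i - lo_mass x i
  | LO i => lo_mass x i
  end.

Definition balance (x : R) : R :=
  x * \sum_(i < K) lambda i * lo_mass x i + (gd + gu) * x.

Lemma lo_mass_den_gt0 x i : 0 <= x -> 0 < lambda i * x + (gui i + gdi i).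
Proof. by move=> x_ge0; rewrite ltr_wpDl ?mulr_ge0 ?addr_gt0 // ltW. Qed.

Lemma lo_massP x i y : 0 <= x ->
  lambda i * x * y + gui i * y = gdi i * (m i - y) <-> y = lo_mass x i.
Proof.
move=> x_ge0; have /lt0r_neq0 den_neq0 := lo_mass_den_gt0 i x_ge0.
rewrite /lo_mass; split => [eq_y | ->]; last by field.
by apply: (mulIf den_neq0); rewrite divfK //; lra.
Qed.

Lemma lo_mass_ge0 x i : 0 <= x -> 0 <= lo_mass x i.
Proof.
move=> x_ge0; rewrite divr_ge0 ?mulr_ge0 ?ltW //.
exact: lo_mass_den_gt0.
Qed.

Lemma lo_mass_le x i : 0 <= x -> lo_mass x i <= m i.
Proof.
move=> x_ge0; rewrite ler_pdivrMr ?lo_mass_den_gt0 // [gdi i * _]mulrC ler_pM2l //.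
have := mulr_ge0 (ltW (lambda_gt0 i)) x_ge0; have := gui_gt0 i; lra.
Qed.

Lemma balance_ge x : 0 <= x -> (gd + gu) * x <= balance x.
Proof.
move=> x_ge0; rewrite /balance lerDr mulr_ge0 // sumr_ge0 // => i _.
by rewrite mulr_ge0 ?lo_mass_ge0 // ltW.
Qed.

Lemma balance_lt x y : 0 <= x -> x < y -> balance x < balance y.
Proof.
move=> x_ge0 lt_xy; rewrite /balance ler_ltD ?ltr_pM2l ?addr_gt0 //.
rewrite !mulr_sumr ler_sum // => i _.
have ratio z : z * (lambda i * lo_mass z i)
    = lambda i * (gdi i * m i) * z / (lambda i * z + (gui i + gdi i)).
  by rewrite /lo_mass; ring.
by rewrite !ratio ler_affine_ratio ?mulr_ge0 ?addr_gt0 ?(ltW lt_xy) // ltW.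
Qed.

Lemma balance_inj x y : 0 <= x -> 0 <= y -> balance x = balance y -> x = y.
Proof.
move=> x_ge0 y_ge0 eq_xy.
by case: (ltgtP x y) => // [/(balance_lt x_ge0) | /(balance_lt y_ge0)];
  rewrite eq_xy ltxx.
Qed.

Lemma balance_continuous x : 0 <= x -> {for x, continuous balance}.
Proof.
move=> x_ge0; apply: continuousD; last exact: continuousM (cvg_cst _) cvg_id.
apply: continuousM; first exact: cvg_id.
apply: (@cvg_big _ _ _ _ _ add_continuous _ (nbhs x)) => i _.
apply: cvgM; first exact: cvg_cst.
apply: cvgM; first exact: cvg_cst.
apply: cvgV; first by rewrite lt0r_neq0 ?lo_mass_den_gt0.
apply: cvgD; last exact: cvg_cst.
by apply: cvgM; [exact: cvg_cst | exact: cvg_id].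
Qed.

Lemma exists_balance_root : exists2 x, 0 <= x & balance x = gu * (1 - supply).
Proof.
have b_gt0 : 0 < 1 - supply by rewrite subr_gt0.
have balance0 : balance 0 = 0 by rewrite /balance !mul0r add0r mulr0.
have balance_b : gu * (1 - supply) <= balance (1 - supply).
  apply: le_trans (balance_ge (ltW b_gt0)).
  by rewrite ler_pM2r // lerDr ltW.
have balance_cont : {within `[0, 1 - supply], continuous balance}%classic.
  apply: continuous_in_subspaceT => x.
  by rewrite inE /= in_itv /= => /andP[/balance_continuous].
have [|x] := IVT (v := gu * (1 - supply)) (ltW b_gt0) balance_cont.
  by rewrite balance0 ge_min mulr_ge0 ?(ltW gu_gt0) ?(ltW b_gt0) // le_max balance_b orbT.
by rewrite in_itv /= => /andP[x_ge0 _]; exists x.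
Qed.

Lemma profile_steady x : 0 <= x -> balance x = gu * (1 - supply) ->
  is_steady_state lambda gui gdi gu gd m (profile x).
Proof.
move=> x_ge0 balance_x.
have x_le : x <= 1 - supply.
  rewrite -(ler_pM2l gu_gt0) -balance_x.
  have := balance_ge x_ge0; have := mulr_ge0 (ltW gd_gt0) x_ge0; lra.
split; [|split; [|split; [|split]]] => [[||i|i]||i|i|] //=.
- by rewrite subr_ge0.
- by rewrite subr_ge0 lo_mass_le.
- exact: lo_mass_ge0.
- move: balance_x; rewrite /balance; lra.
- have := proj2 (lo_massP i _ x_ge0) erefl; lra.
- by rewrite subrK.
- by rewrite /supply; ring.
Qed.

Lemma steady_profile mu : is_steady_state lambda gui gdi gu gd m mu ->
  [/\ 0 <= mu (HN K), balance (mu (HN K)) = gu * (1 - supply)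
     & mu = profile (mu (HN K))].
Proof.
move=> [mu_ge0 [hn_eq [lo_eq [owners_eq mass_eq]]]].
have x_ge0 := mu_ge0 (HN K).
have lo_mu i : mu (LO i) = lo_mass (mu (HN K)) i.
  by apply/(lo_massP i _ x_ge0); have := lo_eq i; rewrite -(owners_eq i); lra.
have ln_mu : mu (LN K) = 1 - supply - mu (HN K) by rewrite /supply; lra.
split => //.
  rewrite /balance; under eq_bigr do rewrite -lo_mu.
  by move: hn_eq; rewrite ln_mu; lra.
apply: boolp.funext => -[||i|i] //=; rewrite -lo_mu //.
by rewrite -(owners_eq i) addrK.
Qed.

End SteadyState.

Theorem proposition1 (R : realType) (K : nat) (hK : (1 <= K)%N)
  (lambda gui gdi : 'I_K -> R) (gu gd : R) (m : 'I_K -> R)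
  (hlambda : forall i, 0 < lambda i)
  (hgui : forall i, 0 < gui i) (hgdi : forall i, 0 < gdi i)
  (hgu : 0 < gu) (hgd : 0 < gd)
  (hm : forall i, 0 < m i) (hsum : \sum_(i < K) m i < 1) :
  exists! mu : state K -> R, is_steady_state lambda gui gdi gu gd m mu.
Proof.
have [x x_ge0 root_x] := exists_balance_root hlambda hgui hgdi hgu hgd hm hsum.
exists (profile lambda gui gdi m x).
split; first exact: (profile_steady hlambda hgui hgdi hgu hgd hm x_ge0 root_x).
move=> mu /(steady_profile hlambda hgui hgdi)[mu_ge0 root_mu ->].
by rewrite (balance_inj hlambda hgui hgdi hgu hgd hm x_ge0 mu_ge0) // root_x root_mu.
Qed.
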